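(* Let $(\mathcal{L},\mathrm{Cn},\mathfrak{M})$ be an ideal logical system and let $\mathrm{FR}:2^{\mathfrak{M}}\to\mathcal{P}_{fin}(\mathcal{L})$ be a function with $\mathrm{Mod}(\mathrm{FR}(\mathbb{M}))=\mathbb{M}$ for every $\mathbb{M}\subseteq\mathfrak{M}$. Define $\mathcal{C}(\mathcal{B},M)\coloneqq\mathrm{FR}(\mathrm{Mod}(\mathcal{B})\setminus[M]^{\mathcal{L}})$ for $\mathcal{B}\in\mathcal{P}_{fin}(\mathcal{L})$ and $M\in\mathfrak{M}$. Then for every $\mathcal{B}\in\mathcal{P}_{fin}(\mathcal{L})$ and $M\in\mathfrak{M}$: (success) $M\notin\mathrm{Mod}(\mathcal{C}(\mathcal{B},M))$; (inclusion) $\mathrm{Mod}(\mathcal{C}(\mathcal{B},M))\subseteq\mathrm{Mod}(\mathcal{B})$; (retainment) if $M'\in\mathrm{Mod}(\mathcal{B})\setminus\mathrm{Mod}(\mathcal{C}(\mathcal{B},M))$ then $M'\equiv^{\mathcal{L}}M$; (extensionality) if $M\equiv^{\mathcal{L}}M'$ then $\mathcal{C}(\mathcal{B},M)=\mathcal{C}(\mathcal{B},M')$.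
   Context: $\mathcal{L}$ is a language (set of formulae), $\mathfrak{M}$ a fixed set of models with a satisfaction relation $\models$ between models and formulae, and $\mathrm{Cn}$ a Tarskian consequence operator on $\mathcal{L}$. $\mathcal{P}_{fin}(\mathcal{L})$ is the set of finite subsets (bases) of $\mathcal{L}$. For $\mathcal{B}\subseteq\mathcal{L}$, $\mathrm{Mod}(\mathcal{B})=\{M\in\mathfrak{M}\mid M\models\varphi$ for all $\varphi\in\mathcal{B}\}$; $\mathrm{Mod}(\varphi)=\mathrm{Mod}(\{\varphi\})$. $M\equiv^{\mathcal{L}}M'$ iff for all $\varphi\in\mathcal{L}$, $M\models\varphi$ iff $M'\models\varphi$; $[M]^{\mathcal{L}}=\{M'\in\mathfrak{M}\mid M'\equiv^{\mathcal{L}}M\}$. The triple $(\mathcal{L},\mathrm{Cn},\mathfrak{M})$ is an ideal logical system if (1) for every $\mathcal{B}\subseteq\mathcal{L}$ and $\varphi\in\mathcal{L}$, $\varphi\in\mathrm{Cn}(\mathcal{B})$ iff $\mathrm{Mod}(\mathcal{B})\subseteq\mathrm{Mod}(\varphi)$, and (2) for every $\mathbb{M}\subseteq\mathfrak{M}$ there is a finite $\mathcal{B}\subseteq\mathcal{L}$ with $\mathrm{Mod}(\mathcal{B})=\mathbb{M}$. *)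

(* abstract logical systems; sets are predicates, finite bases are lists. *)
From Stdlib Require Import List.
Import ListNotations.

Definition set (T : Type) := T -> Prop.

Definition ModS {L Mdl : Type} (sat : Mdl -> L -> Prop) (B : set L) : set Mdl :=
  fun M => forall phi, B phi -> sat M phi.

Definition setOfList {L : Type} (B : list L) : set L := fun phi => In phi B.

Definition Mod {L Mdl : Type} (sat : Mdl -> L -> Prop) (B : list L) : set Mdl :=
  ModS sat (setOfList B).

Definition ModF {L Mdl : Type} (sat : Mdl -> L -> Prop) (phi : L) : set Mdl :=
  fun M => sat M phi.

Definition subset {T : Type} (A B : set T) : Prop := forall x, A x -> B x.

Definition equivL {L Mdl : Type} (sat : Mdl -> L -> Prop) (M M' : Mdl) : Prop :=
  forall phi, sat M phi <-> sat M' phi.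

Definition eqclass {L Mdl : Type} (sat : Mdl -> L -> Prop) (M : Mdl) : set Mdl :=
  fun M' => equivL sat M' M.

Definition setminus {T : Type} (A B : set T) : set T := fun x => A x /\ ~ B x.

Definition tarskian {L : Type} (Cn : set L -> set L) : Prop :=
  (forall B, subset B (Cn B)) /\
  (forall B B', subset B B' -> subset (Cn B) (Cn B')) /\
  (forall B, Cn (Cn B) = Cn B).

Definition ideal_system {L Mdl : Type} (Cn : set L -> set L)
  (sat : Mdl -> L -> Prop) : Prop :=
  (forall (B : set L) (phi : L), Cn B phi <-> subset (ModS sat B) (ModF sat phi)) /\
  (forall (MM : set Mdl), exists B : list L, forall M, Mod sat B M <-> MM M).

Definition Ccontr {L Mdl : Type} (sat : Mdl -> L -> Prop)
  (FR : set Mdl -> list L) (B : list L) (M : Mdl) : list L :=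
  FR (setminus (Mod sat B) (eqclass sat M)).

(* The contraction C(B, M) denotes exactly Mod(B) minus the class of M, so all four
   postulates are statements about that set. *)
From Stdlib Require Import List Classical FunctionalExtensionality PropExtensionality.

Section Contraction.

Variables (L Mdl : Type) (sat : Mdl -> L -> Prop).

Lemma equivL_sym M M' : equivL sat M M' -> equivL sat M' M.
Proof. intros H phi. symmetry. apply H. Qed.

Lemma equivL_trans M1 M2 M3 :
  equivL sat M1 M2 -> equivL sat M2 M3 -> equivL sat M1 M3.
Proof. intros H12 H23 phi. rewrite (H12 phi). apply H23. Qed.

Lemma eqclass_equivL M M' :
  equivL sat M M' -> forall x, eqclass sat M x <-> eqclass sat M' x.
Proof.
  intros HM x. unfold eqclass. split; intros Hx.
  - exact (equivL_trans _ _ _ Hx HM).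
  - exact (equivL_trans _ _ _ Hx (equivL_sym _ _ HM)).
Qed.

Lemma set_ext {T : Type} (A A' : set T) : (forall x, A x <-> A' x) -> A = A'.
Proof.
  intros H. extensionality x. apply propositional_extensionality. apply H.
Qed.

Variable FR : set Mdl -> list L.

Lemma Ccontr_equivL B M M' :
  equivL sat M M' -> Ccontr sat FR B M = Ccontr sat FR B M'.
Proof.
  intros HM. unfold Ccontr, setminus. f_equal. apply set_ext. intros x.
  rewrite (eqclass_equivL M M' HM x). reflexivity.
Qed.

Hypothesis HFR : forall MM M, Mod sat (FR MM) M <-> MM M.

Lemma Mod_Ccontr B M M' :
  Mod sat (Ccontr sat FR B M) M' <-> Mod sat B M' /\ ~ equivL sat M' M.
Proof. apply HFR. Qed.

End Contraction.

Theorem mainTheorem7 (L Mdl : Type) (sat : Mdl -> L -> Prop)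
  (Cn : set L -> set L) (HCn : tarskian Cn) (Hideal : ideal_system Cn sat)
  (FR : set Mdl -> list L)
  (HFR : forall MM : set Mdl, forall M, Mod sat (FR MM) M <-> MM M) :
  forall (B : list L) (M : Mdl),
    ~ Mod sat (Ccontr sat FR B M) M /\
    subset (Mod sat (Ccontr sat FR B M)) (Mod sat B) /\
    (forall M', Mod sat B M' -> ~ Mod sat (Ccontr sat FR B M) M' -> equivL sat M' M) /\
    (forall M', equivL sat M M' -> Ccontr sat FR B M = Ccontr sat FR B M').
Proof.
  intros B M. pose proof (Mod_Ccontr _ _ sat FR HFR B M) as HC.
  split; [| split; [| split]].
  - rewrite HC. intros [_ Hnot]. apply Hnot. intro phi. reflexivity.
  - intros N HN. apply HC in HN. apply HN.
  - intros N HB Hout. apply NNPP. intros Hnot. apply Hout, HC. split; assumption.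
  - apply Ccontr_equivL.
Qed.
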